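(* Let $F:\mathbb{N}\to\mathbb{R}$ be a function such that (a) $F$ is weakly monotonically increasing; (b) $F(q)\to\infty$ as $q\to\infty$; and (c) $q/F(q)\to\infty$ as $q\to\infty$. For each natural number $q$, let $Z_F(q)$ be the number of positive divisors $d$ of $q$ with $d<\sqrt{F(q)}$, minus the number of positive divisors $d$ of $q$ with $\sqrt{F(q)}\le d< F(q)$. Then $$\lim_{B\to\infty}\frac{1}{B}\sum_{q=1}^{B} Z_F(q)=\gamma .$$
   Context: $\gamma$ denotes the Euler–Mascheroni constant, $\gamma=\lim_{n\to\infty}\left(\sum_{k=1}^n \frac1k-\ln n\right)$. $\mathbb{N}=\{1,2,3,\dots\}$. *)

From Stdlib Require Import Reals List Arith.
From Coquelicot Require Import Coquelicot.
Import ListNotations.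
Open Scope R_scope.

Definition harmonic_minus_log (n : nat) : R :=
  sum_n_m (fun k => / INR k) 1 n - ln (INR n).

Definition euler_gamma : R := real (Lim_seq harmonic_minus_log).

Definition divisors_of (q : nat) : list nat :=
  filter (fun d => Nat.eqb (q mod d) 0) (seq 1 q).

Definition Z_F (F : nat -> R) (q : nat) : R :=
  INR (length (filter (fun d => if Rlt_dec (INR d) (sqrt (F q)) then true else false)
                      (divisors_of q)))
  - INR (length (filter (fun d => if Rle_dec (sqrt (F q)) (INR d) then
                                    (if Rlt_dec (INR d) (F q) then true else false)
                                  else false)
                        (divisors_of q))).

(* For d >= 1, [d < sqrt x] - [sqrt x <= d < x] = 2 [d < sqrt x] - [d < x] =: w(x, d), so
   Z_F(q) = sum_{d | q} w(F q, d).  Splitting [d | q] = 1/d + ([d | q] - 1/d) and exchanging the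
   two summations, sum_{q <= B} Z_F(q) is the sum over q of 2 H(sqrt (F q)) - H(F q), where H(y)
   is the harmonic sum over 1 <= d < y, plus error terms E_d(B), one for each d <= B.  Since
   H(y) = ln y + gamma + o(1), the main term tends to 2 ln sqrt(F q) - ln (F q) + gamma = gamma,
   and Cesaro averaging preserves the limit.  The partial sums of [d | q] - 1/d lie in [-1, 0],
   and by monotonicity of F both indicators in w(F q, d) switch on at most once as q grows, so
   |E_d(B)| <= 3; moreover E_d(B) = 0 once d >= F(B).  The total error is thus at most 3 F(B),
   which is o(B). *)

From Stdlib Require Import Reals Lra Lia List ZArith.
From Coquelicot Require Import Coquelicot.
Open Scope R_scope.

Fixpoint sum_to (f : nat -> R) (n : nat) : R :=
  match n with O => 0 | S n' => sum_to f n' + f n end.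

Lemma sum_n_m_sum_to (f : nat -> R) (n : nat) : sum_n_m f 1 n = sum_to f n.
Proof.
  induction n as [|n IH].
  - rewrite sum_n_m_zero; [reflexivity|lia].
  - destruct n as [|n].
    + rewrite sum_n_n. simpl. ring.
    + rewrite sum_n_Sm by lia. rewrite IH. reflexivity.
Qed.

Lemma sum_to_ext (f g : nat -> R) (n : nat) :
  (forall k, (1 <= k <= n)%nat -> f k = g k) -> sum_to f n = sum_to g n.
Proof.
  induction n as [|n IH]; intros H; simpl; [reflexivity|].
  rewrite IH by (intros; apply H; lia). rewrite (H (S n)) by lia. reflexivity.
Qed.

Lemma sum_to_plus (f g : nat -> R) (n : nat) :
  sum_to (fun k => f k + g k) n = sum_to f n + sum_to g n.
Proof. induction n; simpl; [ring|rewrite IHn; ring]. Qed.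

Lemma sum_to_scal (c : R) (f : nat -> R) (n : nat) :
  sum_to (fun k => c * f k) n = c * sum_to f n.
Proof. induction n; simpl; [ring|rewrite IHn; ring]. Qed.

Lemma sum_to_minus (f g : nat -> R) (n : nat) :
  sum_to (fun k => f k - g k) n = sum_to f n - sum_to g n.
Proof. induction n; simpl; [ring|rewrite IHn; ring]. Qed.

Lemma sum_to_zero (n : nat) : sum_to (fun _ => 0) n = 0.
Proof. induction n; simpl; [reflexivity|rewrite IHn; ring]. Qed.

Lemma sum_to_swap (h : nat -> nat -> R) (m n : nat) :
  sum_to (fun q => sum_to (h q) n) m = sum_to (fun d => sum_to (fun q => h q d) m) n.
Proof.
  induction m as [|m IH]; simpl.
  - symmetry. apply sum_to_zero.
  - rewrite IH, <- sum_to_plus. reflexivity.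
Qed.

Lemma sum_to_le (f g : nat -> R) (n : nat) :
  (forall k, (1 <= k <= n)%nat -> f k <= g k) -> sum_to f n <= sum_to g n.
Proof.
  induction n as [|n IH]; intros H; simpl; [lra|].
  assert (sum_to f n <= sum_to g n) by (apply IH; intros; apply H; lia).
  assert (f (S n) <= g (S n)) by (apply H; lia). lra.
Qed.

Lemma Rabs_sum_to_le (f : nat -> R) (n : nat) :
  Rabs (sum_to f n) <= sum_to (fun k => Rabs (f k)) n.
Proof.
  induction n; simpl; [rewrite Rabs_R0; lra|].
  eapply Rle_trans; [apply Rabs_triang|]. lra.
Qed.

Lemma sum_to_trunc (f : nat -> R) (n M : nat) : (n <= M)%nat ->
  (forall k, (n < k <= M)%nat -> f k = 0) -> sum_to f M = sum_to f n.
Proof.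
  induction M as [|M IH]; intros HnM Hf.
  - replace n with 0%nat by lia. reflexivity.
  - destruct (Nat.eq_dec n (S M)) as [->|Hn]; [reflexivity|].
    simpl. rewrite IH by (lia || (intros; apply Hf; lia)). rewrite (Hf (S M)) by lia. ring.
Qed.

Lemma ln_le_sub1 (y : R) : 0 < y -> ln y <= y - 1.
Proof.
  intros Hy. destruct (Req_dec y 1) as [->|Hy1].
  - rewrite ln_1; lra.
  - rewrite <- (ln_exp (y - 1)). apply ln_le; [exact Hy|].
    pose proof (exp_ineq1 (y - 1) ltac:(lra)). lra.
Qed.

Lemma ln_succ_sub_ln_bounds (y : R) : 0 < y -> / (y + 1) <= ln (y + 1) - ln y <= / y.
Proof.
  intros Hy. split.
  - pose proof (ln_le_sub1 (y / (y + 1)) ltac:(apply Rdiv_lt_0_compat; lra)) as H.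
    rewrite ln_div in H by lra.
    replace (y / (y + 1) - 1) with (- / (y + 1)) in H by (field; lra). lra.
  - pose proof (ln_le_sub1 ((y + 1) / y) ltac:(apply Rdiv_lt_0_compat; lra)) as H.
    rewrite ln_div in H by lra.
    replace ((y + 1) / y - 1) with (/ y) in H by (field; lra). lra.
Qed.

Definition harm (n : nat) : R := sum_to (fun k => / INR k) n.

Lemma harm_S (n : nat) : harm (S n) = harm n + / (INR n + 1).
Proof. rewrite <- S_INR. reflexivity. Qed.

Lemma harmonic_minus_log_eq (n : nat) : harmonic_minus_log n = harm n - ln (INR n).
Proof. unfold harmonic_minus_log. rewrite sum_n_m_sum_to. reflexivity. Qed.

Lemma ln_succ_le_harm (n : nat) : ln (INR n + 1) <= harm n.
Proof.
  induction n as [|n IH].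
  - simpl. rewrite Rplus_0_l, ln_1. unfold harm; simpl; lra.
  - rewrite harm_S, S_INR. pose proof (pos_INR n).
    pose proof (ln_succ_sub_ln_bounds (INR n + 1) ltac:(lra)). lra.
Qed.

Lemma is_lim_seq_harmonic_minus_log : is_lim_seq harmonic_minus_log euler_gamma.
Proof.
  assert (Hex : ex_finite_lim_seq (fun n => harmonic_minus_log (S n))).
  { apply ex_finite_lim_seq_decr with 0; intros n; rewrite !harmonic_minus_log_eq.
    - rewrite harm_S, !S_INR. pose proof (pos_INR n).
      pose proof (ln_succ_sub_ln_bounds (INR n + 1) ltac:(lra)). lra.
    - pose proof (ln_succ_le_harm (S n)). rewrite S_INR in *.
      pose proof (pos_INR n).
      pose proof (ln_succ_sub_ln_bounds (INR n + 1) ltac:(lra)).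
      pose proof (Rinv_0_lt_compat (INR n + 1 + 1) ltac:(lra)). lra. }
  destruct Hex as [l Hl]. apply is_lim_seq_incr_1 in Hl.
  unfold euler_gamma. rewrite (is_lim_seq_unique _ _ Hl). exact Hl.
Qed.

Lemma filterlim_of_is_lim_seq_INR (a : nat -> nat) :
  is_lim_seq (fun n => INR (a n)) p_infty -> filterlim a eventually eventually.
Proof.
  intros Ha P [N HN]. apply is_lim_seq_spec in Ha. destruct (Ha (INR N)) as [M HM].
  exists M. intros n Hn. apply HN, Nat.lt_le_incl, INR_lt, HM, Hn.
Qed.

Lemma two_ln_sub_ln_bounds (a b : nat) : (1 <= a)%nat -> (a * a <= b <= S a * S a)%nat ->
  -2 * / INR a <= 2 * ln (INR a) - ln (INR b) <= 0.
Proof.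
  intros Ha [Hlo Hhi]. apply le_INR in Ha, Hlo, Hhi. rewrite !mult_INR, S_INR in *.
  set (x := INR a) in *. simpl in Ha.
  assert (L1 : ln (x * x) <= ln (INR b)) by (apply ln_le; nra).
  assert (L2 : ln (INR b) <= ln ((x + 1) * (x + 1))) by (apply ln_le; nra).
  rewrite ln_mult in L1, L2 by lra.
  pose proof (ln_succ_sub_ln_bounds x ltac:(lra)). lra.
Qed.

Lemma is_lim_seq_two_harm_sub_harm (a b : nat -> nat) :
  is_lim_seq (fun n => INR (a n)) p_infty ->
  eventually (fun n => a n * a n <= b n <= S (a n) * S (a n))%nat ->
  is_lim_seq (fun n => 2 * harm (a n) - harm (b n)) euler_gamma.
Proof.
  intros Ha Hab. pose proof (filterlim_of_is_lim_seq_INR a Ha) as Ha'.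
  assert (Hab1 : eventually (fun n => (1 <= a n)%nat /\
                                      (a n * a n <= b n <= S (a n) * S (a n))%nat)).
  { apply filter_and; [|exact Hab]. apply Ha'. exists 1%nat. auto. }
  assert (Hb : is_lim_seq (fun n => INR (b n)) p_infty).
  { apply is_lim_seq_le_p_loc with (2 := Ha).
    apply filter_imp with (2 := Hab1). intros n [H1 [Hlo _]]. apply le_INR. nia. }
  assert (Hlog : is_lim_seq (fun n => 2 * ln (INR (a n)) - ln (INR (b n))) 0).
  { apply is_lim_seq_le_le_loc with (u := fun n => -2 * / INR (a n)) (w := fun _ => 0).
    - apply filter_imp with (2 := Hab1). intros n [H1 H2]. apply two_ln_sub_ln_bounds; assumption.
    - pose proof (is_lim_seq_inv _ _ Ha ltac:(discriminate)) as Hinv.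
      pose proof (is_lim_seq_scal_l _ (-2) _ Hinv) as H. simpl in H.
      rewrite Rmult_0_r in H. exact H.
    - apply is_lim_seq_const. }
  apply is_lim_seq_ext with
    (u := fun n => 2 * harmonic_minus_log (a n) - harmonic_minus_log (b n)
                   + (2 * ln (INR (a n)) - ln (INR (b n)))).
  { intros n. rewrite !harmonic_minus_log_eq. ring. }
  assert (Hga : is_lim_seq (fun n => harmonic_minus_log (a n)) euler_gamma).
  { apply is_lim_seq_subseq; [exact Ha'|].
    apply is_lim_seq_harmonic_minus_log. }
  assert (Hgb : is_lim_seq (fun n => harmonic_minus_log (b n)) euler_gamma).
  { apply is_lim_seq_subseq; [apply filterlim_of_is_lim_seq_INR, Hb|].
    apply is_lim_seq_harmonic_minus_log. }
  replace euler_gamma with (2 * euler_gamma - euler_gamma + 0) by ring.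
  apply is_lim_seq_plus'; [|exact Hlog].
  apply is_lim_seq_minus'; [|exact Hgb].
  apply is_lim_seq_scal_l with (lu := Finite euler_gamma), Hga.
Qed.

Definition ind_lt (d : nat) (x : R) : R := if Rlt_dec (INR d) x then 1 else 0.

Definition count_lt (x : R) : nat := Z.to_nat (floor1 x).

Definition harm_lt (x : R) : R := harm (count_lt x).

Lemma count_lt_spec (x : R) : 0 < x -> INR (count_lt x) < x <= INR (count_lt x) + 1.
Proof.
  intros Hx. unfold count_lt, floor1. destruct (floor1_ex x) as [n Hn]; simpl.
  assert (Hn0 : (0 <= n)%Z) by (assert (H : IZR (-1) < IZR n) by lra; apply lt_IZR in H; lia).
  rewrite INR_IZR_INZ, Z2Nat.id by exact Hn0. exact Hn.
Qed.

Lemma count_lt_nonpos (x : R) : x <= 0 -> count_lt x = 0%nat.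
Proof.
  intros Hx. unfold count_lt, floor1. destruct (floor1_ex x) as [n Hn]; simpl.
  assert (H : IZR n < IZR 0) by lra. apply lt_IZR in H. lia.
Qed.

Lemma sum_ind_lt_div (x : R) (M : nat) :
  x <= INR M + 1 -> sum_to (fun d => ind_lt d x / INR d) M = harm_lt x.
Proof.
  intros HxM. unfold harm_lt, harm, ind_lt.
  destruct (Rle_lt_dec x 0) as [Hx|Hx].
  - rewrite count_lt_nonpos by exact Hx. simpl sum_to.
    rewrite (sum_to_ext _ (fun _ => 0)); [apply sum_to_zero|].
    intros k Hk. assert (1 <= INR k) by (apply (le_INR 1); lia).
    destruct (Rlt_dec _ _); [lra|unfold Rdiv; ring].
  - destruct (count_lt_spec x Hx) as [Hlo Hhi]. set (n := count_lt x) in *.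
    assert (HnM : (n <= M)%nat) by (apply Nat.lt_succ_r, INR_lt; rewrite S_INR; lra).
    rewrite (sum_to_trunc _ n M HnM).
    + apply sum_to_ext. intros k Hk. destruct (Rlt_dec _ _) as [H|H]; [unfold Rdiv; ring|].
      exfalso. apply H. pose proof (le_INR _ _ (proj2 Hk)). lra.
    + intros k Hk. destruct (Rlt_dec _ _) as [H|H]; [|unfold Rdiv; ring].
      exfalso. pose proof (le_INR (S n) k ltac:(lia)). rewrite S_INR in *. lra.
Qed.

Lemma count_lt_sqrt_bounds (x : R) : 0 < x ->
  (count_lt (sqrt x) * count_lt (sqrt x) <= count_lt x
   <= S (count_lt (sqrt x)) * S (count_lt (sqrt x)))%nat.
Proof.
  intros Hx. pose proof (sqrt_lt_R0 x Hx) as Hs. pose proof (sqrt_sqrt x ltac:(lra)) as Hss.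
  destruct (count_lt_spec _ Hs) as [Ha1 Ha2]. destruct (count_lt_spec _ Hx) as [Hb1 Hb2].
  set (a := count_lt (sqrt x)) in *. set (b := count_lt x) in *.
  pose proof (pos_INR a). split.
  - apply Nat.lt_succ_r, INR_lt. rewrite mult_INR, S_INR. nra.
  - apply INR_le. rewrite mult_INR, S_INR. nra.
Qed.

Lemma is_lim_seq_count_lt (y : nat -> R) :
  is_lim_seq y p_infty -> is_lim_seq (fun n => INR (count_lt (y n))) p_infty.
Proof.
  intros Hy. apply is_lim_seq_spec in Hy. apply is_lim_seq_spec. intros M.
  destruct (Hy (Rmax M 0 + 1)) as [N HN]. exists N. intros n Hn.
  specialize (HN n Hn). pose proof (Rmax_l M 0). pose proof (Rmax_r M 0).
  pose proof (count_lt_spec (y n) ltac:(lra)). lra.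
Qed.

Lemma is_lim_seq_two_harm_lt_sqrt_sub (G : nat -> R) :
  is_lim_seq G p_infty ->
  is_lim_seq (fun q => 2 * harm_lt (sqrt (G q)) - harm_lt (G q)) euler_gamma.
Proof.
  intros HG. apply is_lim_seq_two_harm_sub_harm.
  - apply is_lim_seq_count_lt. exact (filterlim_comp _ _ _ G sqrt _ _ _ HG filterlim_sqrt_p).
  - apply is_lim_seq_spec in HG. destruct (HG 0) as [N HN]. exists N. intros n Hn.
    apply count_lt_sqrt_bounds, HN, Hn.
Qed.

Definition divides_ind (d q : nat) : R := if Nat.eqb (q mod d) 0 then 1 else 0.

Definition divisor_weight (x : R) (d : nat) : R := 2 * ind_lt d (sqrt x) - ind_lt d x.

Lemma length_filter_filter_seq (p r : nat -> bool) (n : nat) :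
  INR (length (filter p (filter r (seq 1 n))))
  = sum_to (fun d => if r d then (if p d then 1 else 0) else 0) n.
Proof.
  induction n as [|n IH]; [reflexivity|].
  rewrite seq_S, !filter_app, length_app, plus_INR, IH.
  replace (1 + n)%nat with (S n) by lia. simpl sum_to. f_equal.
  simpl. destruct (r (S n)); simpl; [|reflexivity].
  destruct (p (S n)); simpl; lra.
Qed.

Lemma lt_of_lt_sqrt (x y : R) : 1 <= x -> x < sqrt y -> x < y.
Proof.
  intros H1 H2. destruct (Rle_lt_dec y 0) as [Hy|Hy].
  - rewrite sqrt_neg_0 in H2 by lra. lra.
  - pose proof (sqrt_sqrt y ltac:(lra)). nra.
Qed.

Lemma Z_F_as_sum (F : nat -> R) (q : nat) :
  Z_F F q = sum_to (fun d => divides_ind d q * divisor_weight (F q) d) q.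
Proof.
  unfold Z_F, divisors_of. rewrite !length_filter_filter_seq, <- sum_to_minus.
  apply sum_to_ext. intros d Hd.
  assert (H1 : 1 <= INR d) by (apply (le_INR 1); lia).
  unfold divides_ind, divisor_weight, ind_lt.
  destruct (Nat.eqb _ _); [|ring].
  destruct (Rlt_dec (INR d) (sqrt (F q))) as [H|H].
  - pose proof (lt_of_lt_sqrt _ _ H1 H).
    destruct (Rle_dec _ _); [lra|]. destruct (Rlt_dec _ _); lra.
  - destruct (Rle_dec _ _); [|lra]. destruct (Rlt_dec _ _); lra.
Qed.

Lemma divisor_weight_eq0 (x : R) (d : nat) : (1 <= d)%nat -> x <= INR d -> divisor_weight x d = 0.
Proof.
  intros Hd Hx. assert (H1 : 1 <= INR d) by (apply (le_INR 1); lia).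
  unfold divisor_weight, ind_lt.
  destruct (Rlt_dec (INR d) (sqrt x)) as [H|H].
  - pose proof (lt_of_lt_sqrt _ _ H1 H). lra.
  - destruct (Rlt_dec _ _); lra.
Qed.

Lemma sum_divisor_weight_div (x : R) (M : nat) : x <= INR M + 1 ->
  sum_to (fun d => divisor_weight x d / INR d) M = 2 * harm_lt (sqrt x) - harm_lt x.
Proof.
  intros HxM. assert (HsM : sqrt x <= INR M + 1).
  { pose proof (pos_INR M). destruct (Rle_lt_dec x 1) as [Hx|Hx].
    - pose proof (sqrt_le_1_alt _ _ Hx). rewrite sqrt_1 in *. lra.
    - pose proof (sqrt_less_alt x Hx). lra. }
  rewrite <- (sum_ind_lt_div _ _ HxM), <- (sum_ind_lt_div _ _ HsM), <- sum_to_scal,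
    <- sum_to_minus.
  apply sum_to_ext. intros d _. unfold divisor_weight, Rdiv. ring.
Qed.

Definition divisor_error (F : nat -> R) (d B : nat) : R :=
  sum_to (fun q => (divides_ind d q - / INR d) * divisor_weight (F q) d) B.

Lemma sum_to_Z_F_decomposition (F : nat -> R) (B : nat) :
  (forall q, (1 <= q <= B)%nat -> F q <= INR B + 1) ->
  sum_to (Z_F F) B
  = sum_to (fun q => 2 * harm_lt (sqrt (F q)) - harm_lt (F q)) B
    + sum_to (fun d => divisor_error F d B) B.
Proof.
  intros HF.
  transitivity (sum_to (fun q => sum_to (fun d => divides_ind d q * divisor_weight (F q) d) B) B).
  { apply sum_to_ext. intros q Hq. rewrite Z_F_as_sum. symmetry.
    apply sum_to_trunc; [lia|]. intros d Hd.
    unfold divides_ind. rewrite Nat.mod_small by lia.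
    destruct q; [lia|]. simpl. ring. }
  rewrite sum_to_swap.
  transitivity (sum_to (fun d => sum_to (fun q => divisor_weight (F q) d / INR d) B
                                 + divisor_error F d B) B).
  { apply sum_to_ext. intros d _. unfold divisor_error.
    rewrite <- sum_to_plus. apply sum_to_ext. intros q _. unfold Rdiv. ring. }
  rewrite sum_to_plus, <- sum_to_swap. f_equal.
  apply sum_to_ext. intros q Hq. apply sum_divisor_weight_div, HF, Hq.
Qed.

Lemma sum_to_divides_ind_sub (d n : nat) : (1 <= d)%nat ->
  sum_to (fun q => divides_ind d q - / INR d) n = - INR (n mod d) / INR d.
Proof.
  intros Hd. assert (Hd' : 0 < INR d) by (apply lt_0_INR; lia).
  induction n as [|n IH].
  - simpl. rewrite Nat.Div0.mod_0_l. simpl. field. lra.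
  - simpl sum_to. rewrite IH. unfold divides_ind.
    pose proof (Nat.div_mod n d ltac:(lia)) as Hdm.
    pose proof (Nat.mod_upper_bound n d ltac:(lia)) as Hub.
    destruct (Nat.eq_dec (S (n mod d)) d) as [He|He].
    + assert (Hm : S n mod d = 0%nat).
      { symmetry. apply Nat.mod_unique with (q := S (n / d)%nat); lia. }
      rewrite Hm. simpl Nat.eqb.
      assert (Hdr : INR d = INR (n mod d) + 1) by (rewrite <- S_INR; f_equal; lia).
      pose proof (pos_INR (n mod d)). rewrite Hdr. simpl INR. field. lra.
    + assert (Hm : S n mod d = S (n mod d)).
      { symmetry. apply Nat.mod_unique with (q := (n / d)%nat); lia. }
      rewrite Hm. simpl Nat.eqb. rewrite S_INR. field. lra.
Qed.

Lemma sum_to_divides_ind_sub_bounds (d n : nat) : (1 <= d)%nat ->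
  -1 <= sum_to (fun q => divides_ind d q - / INR d) n <= 0.
Proof.
  intros Hd. rewrite sum_to_divides_ind_sub by exact Hd.
  assert (Hd' : 0 < INR d) by (apply lt_0_INR; lia).
  pose proof (lt_INR _ _ (Nat.mod_upper_bound n d ltac:(lia))).
  pose proof (pos_INR (n mod d)).
  pose proof (Rinv_0_lt_compat _ Hd'). unfold Rdiv. split.
  - apply (Rmult_le_reg_r (INR d)); [lra|].
    rewrite Rmult_assoc, Rinv_l by lra. lra.
  - nra.
Qed.

(* If u switches from 0 to 1 after k, the sum is S B - S k for the partial sums S of c. *)
Lemma Rabs_sum_to_mul_step_le (c u : nat -> R) (lo hi : R) (B : nat) :
  (forall n, lo <= sum_to c n <= hi) ->
  (forall q, u q = 0 \/ u q = 1) ->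
  (forall q, (1 <= q)%nat -> u q <= u (S q)) ->
  Rabs (sum_to (fun q => c q * u q) B) <= hi - lo.
Proof.
  intros Hc H01 Hu.
  assert (Hstep : forall m, exists k,
    sum_to (fun q => c q * u q) m = sum_to c m - sum_to c k /\ (u m = 0 -> k = m)).
  { induction m as [|m [k [Hk HkB]]].
    - exists 0%nat. simpl. split; [ring|reflexivity].
    - destruct (H01 (S m)) as [Hu0|Hu1].
      + exists (S m). split; [|reflexivity]. simpl sum_to. rewrite Hu0.
        destruct m as [|m']; [simpl; ring|].
        assert (Hz : u (S m') = 0).
        { pose proof (Hu (S m') ltac:(lia)). destruct (H01 (S m')); lra. }
        rewrite Hk, (HkB Hz). ring.
      + exists k. split; [|lra]. simpl sum_to. rewrite Hk, Hu1. ring. }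
  destruct (Hstep B) as [k [Hk _]]. rewrite Hk.
  pose proof (Hc B). pose proof (Hc k). apply Rabs_le. lra.
Qed.

Lemma ind_lt_01 (d : nat) (x : R) : ind_lt d x = 0 \/ ind_lt d x = 1.
Proof. unfold ind_lt. destruct (Rlt_dec _ _); auto. Qed.

Lemma ind_lt_le_compat (d : nat) (x y : R) : x <= y -> ind_lt d x <= ind_lt d y.
Proof.
  intros Hxy. unfold ind_lt.
  destruct (Rlt_dec _ x), (Rlt_dec _ y); lra.
Qed.

Lemma sum_to_ind_lt_le (x : R) (B : nat) : 0 <= x -> sum_to (fun d => ind_lt d x) B <= x.
Proof.
  intros Hx.
  assert (HB : forall m, sum_to (fun d => ind_lt d x) m <= INR m).
  { induction m; simpl sum_to; [simpl; lra|]. rewrite S_INR.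
    pose proof (ind_lt_01 (S m) x). lra. }
  induction B as [|B IH]; [simpl; lra|].
  simpl sum_to. unfold ind_lt at 2. destruct (Rlt_dec _ _) as [H|H].
  - pose proof (HB B). rewrite S_INR in H. lra.
  - lra.
Qed.

Section Monotone.

Variable F : nat -> R.
Hypothesis F_mono : forall m n : nat, (1 <= m)%nat -> (m <= n)%nat -> F m <= F n.

Lemma Rabs_divisor_error_le (d B : nat) : (1 <= d)%nat -> Rabs (divisor_error F d B) <= 3.
Proof.
  intros Hd. unfold divisor_error, divisor_weight.
  set (c q := divides_ind d q - / INR d).
  rewrite (sum_to_ext _ (fun q => 2 * (c q * ind_lt d (sqrt (F q))) - c q * ind_lt d (F q)))
    by (intros; unfold c; ring).
  rewrite sum_to_minus, sum_to_scal.
  assert (Hc : forall n, -1 <= sum_to c n <= 0) by (intros; apply sum_to_divides_ind_sub_bounds, Hd).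
  pose proof (Rabs_sum_to_mul_step_le c (fun q => ind_lt d (sqrt (F q))) _ _ B Hc
    (fun q => ind_lt_01 d _)
    (fun q Hq => ind_lt_le_compat d _ _ (sqrt_le_1_alt _ _ (F_mono q (S q) Hq (Nat.le_succ_diag_r q))))).
  pose proof (Rabs_sum_to_mul_step_le c (fun q => ind_lt d (F q)) _ _ B Hc
    (fun q => ind_lt_01 d _)
    (fun q Hq => ind_lt_le_compat d _ _ (F_mono q (S q) Hq (Nat.le_succ_diag_r q)))).
  eapply Rle_trans; [apply Rabs_triang|].
  rewrite Rabs_Ropp, Rabs_mult, (Rabs_pos_eq 2) by lra. lra.
Qed.

Lemma divisor_error_eq0 (d B : nat) : (1 <= d)%nat -> F B <= INR d -> divisor_error F d B = 0.
Proof.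
  intros Hd HB. unfold divisor_error. rewrite (sum_to_ext _ (fun _ => 0)).
  - apply sum_to_zero.
  - intros q Hq. rewrite divisor_weight_eq0; [ring|exact Hd|].
    pose proof (F_mono q B ltac:(lia) ltac:(lia)). lra.
Qed.

Lemma Rabs_sum_divisor_error_le (B : nat) : 0 <= F B ->
  Rabs (sum_to (fun d => divisor_error F d B) B) <= 3 * F B.
Proof.
  intros HF. eapply Rle_trans; [apply Rabs_sum_to_le|].
  eapply Rle_trans with (sum_to (fun d => 3 * ind_lt d (F B)) B).
  - apply sum_to_le. intros d Hd. unfold ind_lt. destruct (Rlt_dec _ _) as [H|H].
    + rewrite Rmult_1_r. apply Rabs_divisor_error_le. lia.
    + rewrite divisor_error_eq0 by (lia || lra). rewrite Rabs_R0. lra.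
  - rewrite sum_to_scal. pose proof (sum_to_ind_lt_le (F B) B HF). lra.
Qed.

End Monotone.

Lemma sum_f_R0_shift (f : nat -> R) (n : nat) : sum_f_R0 (fun k => f (S k)) n = sum_to f (S n).
Proof. induction n; simpl sum_f_R0; [simpl; ring|]. rewrite IHn. reflexivity. Qed.

Lemma is_lim_seq_cesaro (f : nat -> R) (l : R) :
  is_lim_seq f l -> is_lim_seq (fun B => / INR B * sum_to f B) l.
Proof.
  intros H. apply is_lim_seq_incr_1, is_lim_seq_Reals, Cesaro_1, is_lim_seq_Reals in H.
  apply is_lim_seq_ext_loc with (2 := H). exists 1%nat. intros n Hn.
  destruct n as [|n]; [lia|]. simpl pred. rewrite sum_f_R0_shift. unfold Rdiv. ring.
Qed.

Lemma eventually_pos_lt_INR (F : nat -> R) :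
  is_lim_seq (fun q => INR q / F q) p_infty -> eventually (fun q => 0 < F q < INR q).
Proof.
  intros Hratio. apply is_lim_seq_spec in Hratio. destruct (Hratio 1) as [N HN].
  exists N. intros q Hq. specialize (HN q Hq). pose proof (pos_INR q).
  assert (HF : 0 < F q).
  { destruct (Rle_lt_dec (F q) 0) as [Hle|]; [|assumption].
    assert (/ F q <= 0).
    { destruct (Req_dec (F q) 0) as [->|]; [rewrite Rinv_0; lra|].
      apply Rlt_le, Rinv_lt_0_compat. lra. }
    unfold Rdiv in HN. nra. }
  split; [exact HF|].
  apply (Rmult_lt_compat_r (F q)) in HN; [|exact HF].
  unfold Rdiv in HN. rewrite Rmult_assoc, Rinv_l in HN by lra. lra.
Qed.

Lemma is_lim_seq_mean_divisor_error (F : nat -> R) :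
  (forall m n : nat, (1 <= m)%nat -> (m <= n)%nat -> F m <= F n) ->
  is_lim_seq (fun q => INR q / F q) p_infty ->
  is_lim_seq (fun B => / INR B * sum_to (fun d => divisor_error F d B) B) 0.
Proof.
  intros Hmono Hratio.
  assert (Hdens : is_lim_seq (fun B => / INR B * F B) 0).
  { apply is_lim_seq_ext with (u := fun B => / (INR B / F B)).
    { intros B. unfold Rdiv. rewrite Rinv_mult, Rinv_inv. reflexivity. }
    exact (is_lim_seq_inv _ _ Hratio ltac:(discriminate)). }
  apply is_lim_seq_abs_0, is_lim_seq_le_le_loc with
    (u := fun _ => 0) (w := fun B => 3 * (/ INR B * F B)).
  - destruct (eventually_pos_lt_INR F Hratio) as [N HN]. exists N. intros B HB.
    destruct (HN B HB) as [HF0 HFB].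
    assert (HB0 : 0 < / INR B) by (apply Rinv_0_lt_compat; lra).
    rewrite Rabs_mult, Rabs_pos_eq by lra. split; [apply Rmult_le_pos; [lra|apply Rabs_pos]|].
    pose proof (Rabs_sum_divisor_error_le F Hmono B ltac:(lra)). nra.
  - apply is_lim_seq_const.
  - replace 0 with (3 * 0) by ring. apply is_lim_seq_scal_l with (lu := Finite 0), Hdens.
Qed.

Theorem theorem1 (F : nat -> R)
  (Hmono : forall m n : nat, (1 <= m)%nat -> (m <= n)%nat -> F m <= F n)
  (Hinf : is_lim_seq F p_infty)
  (Hratio : is_lim_seq (fun q => INR q / F q) p_infty) :
  is_lim_seq (fun B => / INR B * sum_n_m (fun q => Z_F F q) 1 B) euler_gamma.
Proof.
  apply is_lim_seq_ext_loc with
    (u := fun B => / INR B * sum_to (fun q => 2 * harm_lt (sqrt (F q)) - harm_lt (F q)) B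
                   + / INR B * sum_to (fun d => divisor_error F d B) B).
  { destruct (eventually_pos_lt_INR F Hratio) as [N HN]. exists (max N 1). intros B HB.
    rewrite sum_n_m_sum_to, sum_to_Z_F_decomposition; [ring|].
    intros q Hq. pose proof (Hmono q B ltac:(lia) ltac:(lia)).
    destruct (HN B ltac:(lia)). lra. }
  replace euler_gamma with (euler_gamma + 0) by ring.
  apply is_lim_seq_plus'.
  - apply is_lim_seq_cesaro, is_lim_seq_two_harm_lt_sqrt_sub, Hinf.
  - apply is_lim_seq_mean_divisor_error; assumption.
Qed.
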